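(* Consider the continuous-time Markov process on $\mathbb N_0=\{0,1,2,\dots\}$ with rates $q(0,1)=1$, and for $x\ge1$: $q(x,x+1)=\frac{2x-1}{4x}$, $q(x,x-1)=1-\frac{2x-1}{4x}$, all other rates $0$ (so its jump chain has mean drift $-\frac{1}{2x}$ at $x\ge1$). Consider the $2$-leg spider walk with local configurations $L(x)=\{(x,x+1),(x,x+2)\}$, $x\in\mathbb N_0$, i.e. the process on $\{(x,x+1),(x,x+2):x\ge0\}$ in which a leg at $y$ jumps to $y\pm1$ at rate $q(y,y\pm1)$ provided the resulting configuration is again of this form. Then the Markov process is null recurrent whereas the spider walk is positive recurrent.
   Context: A continuous-time Markov process is called null/positive recurrent if its jump chain, with transition probabilities $p(x,y)=q(x,y)/\sum_{z\ne x}q(x,z)$ for $y\ne x$, is null/positive recurrent. *)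

From Stdlib Require Import Reals List Arith Bool.
Import ListNotations.
Open Scope R_scope.

(* ---------- Generic continuous-time Markov process on a countable space ----
   A process is given by its rate function q : S -> S -> R together with a
   finite list cand x of candidate targets: every y <> x with q x y <> 0
   must occur in cand x (this holds by construction for the concrete
   processes below).  Sums over "z <> x" are taken over the duplicate-free
   candidate list with x removed. *)
Record ctmc := {
  st : Type;
  st_eq_dec : forall x y : st, {x = y} + {x <> y};
  rate : st -> st -> R;
  cand : st -> list st
}.

Definition targets (M : ctmc) (x : st M) : list (st M) :=
  filter (fun z => if st_eq_dec M z x then false else true)
         (nodup (st_eq_dec M) (cand M x)).

Definition sumR {A : Type} (f : A -> R) (l : list A) : R :=
  fold_right (fun a acc => f a + acc) 0 l.

Definition out_rate (M : ctmc) (x : st M) : R :=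
  sumR (rate M x) (targets M x).

Definition jump_p (M : ctmc) (x y : st M) : R :=
  if st_eq_dec M y x then 0 else rate M x y / out_rate M x.

(* first_passage M x n y = P_y(tau_x = n), tau_x = inf{n >= 1 : X_n = x},
   for the jump chain started at y. *)
Fixpoint first_passage (M : ctmc) (x : st M) (n : nat) (y : st M) : R :=
  match n with
  | O => 0
  | S O => jump_p M y x
  | S ((S _) as m) =>
      sumR (fun z => if st_eq_dec M z x then 0
                     else jump_p M y z * first_passage M x m z)
           (targets M y)
  end.

Definition recurrent_state (M : ctmc) (x : st M) : Prop :=
  infinite_sum (fun n => first_passage M x n x) 1.

Definition finite_mean_return (M : ctmc) (x : st M) : Prop :=
  exists m : R, infinite_sum (fun n => INR n * first_passage M x n x) m.

Definition positive_recurrent_state (M : ctmc) (x : st M) : Prop :=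
  recurrent_state M x /\ finite_mean_return M x.

Definition null_recurrent_state (M : ctmc) (x : st M) : Prop :=
  recurrent_state M x /\ ~ finite_mean_return M x.

(* the process is null/positive recurrent iff its jump chain is,
   i.e. every state is null/positive recurrent for the jump chain *)
Definition null_recurrent (M : ctmc) : Prop :=
  forall x : st M, null_recurrent_state M x.
Definition positive_recurrent (M : ctmc) : Prop :=
  forall x : st M, positive_recurrent_state M x.

Definition qbd (x y : nat) : R :=
  match x with
  | O => if Nat.eqb y 1 then 1 else 0
  | S _ =>
      if Nat.eqb y (S x) then (2 * INR x - 1) / (4 * INR x)
      else if Nat.eqb (S y) x then 1 - (2 * INR x - 1) / (4 * INR x)
      else 0
  end.

Definition BD : ctmc := {|
  st := nat;
  st_eq_dec := Nat.eq_dec;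
  rate := qbd;
  cand := fun x => [S x; Nat.pred x]
|}.

(* Configurations (x,x+1) and (x,x+2), x >= 0, encoded as (x,false) and
   (x,true) respectively. *)
Definition spst : Type := (nat * bool)%type.

Definition spst_eq_dec : forall s t : spst, {s = t} + {s <> t}.
Proof. decide equality; [apply bool_dec | apply Nat.eq_dec]. Defined.

Definition config (s : spst) : nat * nat :=
  let (x, b) := s in if b then (x, x + 2)%nat else (x, x + 1)%nat.

Definition decode (c : nat * nat) : option spst :=
  let (a, b) := c in
  if Nat.eqb b (a + 1) then Some (a, false)
  else if Nat.eqb b (a + 2) then Some (a, true)
  else None.

Definition leg_moves (c : nat * nat) : list ((nat * nat) * R) :=
  let (a, b) := c in
     [((S a, b), qbd a (S a)); ((a, S b), qbd b (S b))]
  ++ (match a with O => [] | S a' => [((a', b), qbd a a')] end)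
  ++ (match b with O => [] | S b' => [((a, b'), qbd b b')] end).

Definition pair_eqb (c d : nat * nat) : bool :=
  Nat.eqb (fst c) (fst d) && Nat.eqb (snd c) (snd d).

(* rate from s to t: the rate of a leg move turning config s into config t
   (the move is allowed only if the result is again a configuration, which
   is automatic as t is a state) *)
Definition qspider (s t : spst) : R :=
  sumR (fun m => if pair_eqb (fst m) (config t) then snd m else 0)
       (leg_moves (config s)).

Definition spider_cand (s : spst) : list spst :=
  flat_map (fun m => match decode (fst m) with Some t => [t] | None => [] end)
           (leg_moves (config s)).

Definition SPIDER : ctmc := {|
  st := spst;
  st_eq_dec := spst_eq_dec;
  rate := qspider;
  cand := spider_cand
|}.

From Stdlib Require Import Reals List Lra Lia Arith Bool.
Import ListNotations.
Open Scope R_scope.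

(* Both processes have a jump chain that, after enumerating the states along
   a line, is a birth-death chain on nat: from k it moves to k+1 with
   probability a k and to k-1 otherwise, with a 0 = 1.  For the process on
   N_0 the enumeration is the identity; for the spider it is
   2x <-> (x,x+1), 2x+1 <-> (x,x+2), each configuration having one neighbour
   on either side.
   Finally the rates of both processes are computed: the drift -1/(2x) of the
   birth-death process makes it null recurrent, while the spider's jump
   chain has drift about -1/k at k and admits the Lyapunov function k^2. *)

Fixpoint psum (f : nat -> R) (n : nat) : R :=
  match n with O => 0 | S n' => psum f n' + f n' end.

Definition diverges (f : nat -> R) : Prop := forall M, exists n, M <= psum f n.

Lemma psum_ext (f g : nat -> R) n : (forall j, f j = g j) -> psum f n = psum g n.
Proof. intros Hfg; induction n as [|n IH]; simpl; [reflexivity|]. rewrite IH, Hfg; reflexivity. Qed.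

Lemma diverges_ext (f g : nat -> R) : (forall j, f j = g j) -> diverges f -> diverges g.
Proof.
  intros Hfg Hf M. destruct (Hf M) as [n Hn]. exists n. rewrite <- (psum_ext f g n Hfg). exact Hn.
Qed.

Lemma psum_le (f g : nat -> R) n : (forall j, f j <= g j) -> psum f n <= psum g n.
Proof. intros Hfg; induction n as [|n IH]; simpl; [lra|]. pose proof (Hfg n); lra. Qed.

Lemma diverges_le (f g : nat -> R) : (forall j, f j <= g j) -> diverges f -> diverges g.
Proof.
  intros Hfg Hf M. destruct (Hf M) as [n Hn]. exists n.
  pose proof (psum_le f g n Hfg). lra.
Qed.

(* A nonnegative sequence d with d (i+1) = (q i / p i) d i, where the ratio is
   at least 1 from index 1 on, grows at least linearly unless it vanishes;
   bounded partial sums therefore force d = 0.  This is the heart of the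
   uniqueness of bounded harmonic functions below. *)
Lemma increments_vanish (p q d : nat -> R) (B : R) :
  (forall i, 0 < p i) -> (forall i, 0 < q i) -> (forall i, (1 <= i)%nat -> p i <= q i) ->
  (forall i, p i * d (S i) = q i * d i) -> 0 <= d O ->
  (forall n, psum d n <= B) -> forall i, d i = 0.
Proof.
  intros Hp Hq Hpq Hrec Hd0 HB.
  assert (Hnn : forall i, 0 <= d i).
  { induction i as [|i IH]; [exact Hd0|].
    pose proof (Hrec i); pose proof (Hp i); pose proof (Hq i). nra. }
  assert (Hlow : forall i, d 1%nat <= d (S i)).
  { induction i as [|i IH]; [lra|].
    pose proof (Hrec (S i)); pose proof (Hpq (S i) ltac:(lia)); pose proof (Hp (S i));
    pose proof (Hnn (S i)). nra. }
  assert (Hlin : forall n, INR n * d 1%nat <= psum d (S n)).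
  { induction n as [|n IH]; cbn [psum] in *; [pose proof (Hnn 0%nat); simpl; lra|].
    rewrite S_INR. pose proof (Hlow n). lra. }
  assert (Hd1 : d 1%nat = 0).
  { destruct (Rle_lt_or_eq_dec 0 (d 1%nat) (Hnn 1%nat)) as [Hpos|]; [|auto].
    destruct (INR_archimed (d 1%nat) B Hpos) as [n Hn].
    pose proof (Hlin n); pose proof (HB (S n)). lra. }
  assert (Hd0' : d O = 0).
  { pose proof (Hrec O) as E. rewrite Hd1, Rmult_0_r in E. pose proof (Hq O).
    symmetry in E. apply Rmult_integral in E. destruct E; lra. }
  induction i as [|i IH]; [exact Hd0'|].
  pose proof (Hrec i) as E. rewrite IH, Rmult_0_r in E. pose proof (Hp i).
  apply Rmult_integral in E. destruct E; lra.
Qed.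

(* If u >= 0 solved the Poisson equation
     u (i+1) = 1 + alpha i * u (i+2) + (1 - alpha i) * u i
   and beta is a positive weight with beta (i+1) (1 - alpha i) = beta i alpha i
   such that sum beta i / (1 - alpha i) diverges, then the weighted increments
   beta i (u (i+1) - u i) would tend to -oo, so u would eventually decrease
   linearly and become negative. *)
Lemma no_nonneg_poisson_solution (alpha beta u : nat -> R) :
  (forall i, 0 < alpha i < 1) -> (forall i, 0 < beta i <= 1) ->
  (forall i, beta (S i) * (1 - alpha i) = beta i * alpha i) ->
  diverges (fun j => beta j / (1 - alpha j)) -> (forall i, 0 <= u i) ->
  ~ (forall i, u (S i) = 1 + alpha i * u (S (S i)) + (1 - alpha i) * u i).
Proof.
  intros Halpha Hbeta Hrec Hdiv Hnn Hpoisson.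
  set (c := fun j => beta j / (1 - alpha j)).
  set (r := fun i => beta i * (u (S i) - u i)).
  assert (Hr1 : forall i, r (S i) = r i - c i).
  { intros i. unfold r, c. pose proof (Halpha i) as [Ha0 Ha1].
    assert (Hb : beta (S i) = beta i * alpha i / (1 - alpha i))
      by (rewrite <- (Hrec i); field; lra).
    assert (Hstep : alpha i * (u (S (S i)) - u (S i)) = (1 - alpha i) * (u (S i) - u i) - 1)
      by (pose proof (Hpoisson i); lra).
    rewrite Hb.
    replace (beta i * alpha i / (1 - alpha i) * (u (S (S i)) - u (S i)))
      with (beta i / (1 - alpha i) * (alpha i * (u (S (S i)) - u (S i)))) by (field; lra).
    rewrite Hstep. field. lra. }
  assert (Hr : forall i, r i = r O - psum c i).
  { induction i as [|i IH]; simpl; [ring|]. rewrite Hr1, IH. ring. }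
  assert (Hc : forall j, 0 <= c j).
  { intros j. unfold c. pose proof (Hbeta j); pose proof (Halpha j).
    apply Rmult_le_pos; [lra|left; apply Rinv_0_lt_compat; lra]. }
  assert (Hmono : forall n k, psum c n <= psum c (n + k)).
  { intros n k; induction k as [|k IH]; [rewrite Nat.add_0_r; lra|].
    rewrite Nat.add_succ_r. simpl. pose proof (Hc (n + k)%nat). lra. }
  (* once the partial sums exceed r 0 + 1, every increment is at most -1 *)
  destruct (Hdiv (r O + 1)) as [n Hn]. fold c in Hn.
  assert (Hdec : forall k, u (S (n + k)) - u (n + k)%nat <= -1).
  { intros k. pose proof (Hr (n + k)%nat); pose proof (Hmono n k); pose proof (Hbeta (n + k)%nat).
    unfold r in *. set (d := u (S (n + k)) - u (n + k)%nat) in *.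
    destruct (Rle_dec d (-1)) as [|Hd]; [auto|].
    assert (beta (n + k)%nat * (d + 1) > 0) by (apply Rmult_gt_0_compat; lra). nra. }
  assert (Hlin : forall k, u (n + k)%nat <= u n - INR k).
  { induction k as [|k IH]; [rewrite Nat.add_0_r; simpl; lra|].
    rewrite S_INR, Nat.add_succ_r. pose proof (Hdec k). lra. }
  destruct (INR_archimed 1 (u n) ltac:(lra)) as [k Hk].
  pose proof (Hlin k); pose proof (Hnn (n + k)%nat). lra.
Qed.

Lemma cv_const c : Un_cv (fun _ => c) c.
Proof. intros e He. exists 0%nat. intros. unfold R_dist. rewrite Rminus_diag, Rabs_R0. lra. Qed.

Lemma cv_succ U l : Un_cv U l -> Un_cv (fun N => U (S N)) l.
Proof. intros H e He. destruct (H e He) as [N HN]. exists N. intros n Hn. apply HN. lia. Qed.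

Section BirthDeathChain.

(* The birth-death jump chain on nat: from k it moves to k+1 with
   probability a k and to k-1 with probability 1 - a k. *)
Variable a : nat -> R.

Definition step (k : nat) (G : nat -> R) : R :=
  a k * G (S k) + match k with O => 0 | S k' => (1 - a k) * G k' end.

Lemma step_succ k G : step (S k) G = a (S k) * G (S (S k)) + (1 - a (S k)) * G k.
Proof. reflexivity. Qed.

Lemma step_ext k G1 G2 : (forall j, G1 j = G2 j) -> step k G1 = step k G2.
Proof. intros H; unfold step; destruct k; rewrite !H; reflexivity. Qed.

Lemma step_add k G1 G2 : step k G1 + step k G2 = step k (fun j => G1 j + G2 j).
Proof. unfold step; destruct k; ring. Qed.

Lemma step_sub k G1 G2 : step k G1 - step k G2 = step k (fun j => G1 j - G2 j).
Proof. unfold step; destruct k; ring. Qed.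

Lemma step_scal k c G : c * step k G = step k (fun j => c * G j).
Proof. unfold step; destruct k; ring. Qed.

Lemma step_zero k : step k (fun _ => 0) = 0.
Proof. unfold step; destruct k; ring. Qed.

Lemma step_cv k (G : nat -> nat -> R) (L : nat -> R) :
  (forall j, Un_cv (fun N => G N j) (L j)) -> Un_cv (fun N => step k (G N)) (step k L).
Proof.
  intros H. unfold step. destruct k.
  - apply (CV_plus _ (fun _ => 0)); [apply CV_mult; [apply cv_const|apply H]|apply cv_const].
  - apply CV_plus; apply CV_mult; try apply cv_const; apply H.
Qed.

Definition up_probs : Prop := a O = 1 /\ forall k, (1 <= k)%nat -> 0 < a k < 1.

Hypothesis Hup : up_probs.

Lemma up_prob_bounds k : 0 < a k <= 1.
Proof.
  destruct Hup as [H0 H1]. destruct k as [|k]; [rewrite H0; lra|].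
  pose proof (H1 (S k) ltac:(lia)); lra.
Qed.

Lemma step_const1 k : step k (fun _ => 1) = 1.
Proof. destruct Hup as [H0 _]; unfold step; destruct k; [rewrite H0|]; ring. Qed.

Lemma step_mono k G1 G2 : (forall j, G1 j <= G2 j) -> step k G1 <= step k G2.
Proof.
  intros H; pose proof (up_prob_bounds k); unfold step; destruct k.
  - pose proof (H 1%nat); nra.
  - pose proof (H (S (S k))); pose proof (H k); nra.
Qed.

Lemma step_nonneg k G : (forall j, 0 <= G j) -> 0 <= step k G.
Proof. intros H. rewrite <- (step_zero k). apply step_mono; auto. Qed.

(* Since a 0 = 1, the downward term can be written uniformly with pred k. *)
Lemma step_pred k G : step k G = a k * G (S k) + (1 - a k) * G (pred k).
Proof. destruct Hup as [H0 _]. unfold step. destruct k; [rewrite H0|]; simpl; ring. Qed.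

Lemma step_ge_up k G : (forall j, 0 <= G j) -> a k * G (S k) <= step k G.
Proof.
  intros HG. pose proof (up_prob_bounds k). unfold step. destruct k; [lra|].
  pose proof (HG k). nra.
Qed.

Variable x0 : nat.

Definition killed (g : nat -> R) (j : nat) : R := if Nat.eqb j x0 then 0 else g j.

Lemma killed_ne g j : j <> x0 -> killed g j = g j.
Proof. intros H; unfold killed; destruct (Nat.eqb_spec j x0); [lia|reflexivity]. Qed.

Lemma killed_target g : killed g x0 = 0.
Proof. unfold killed; rewrite Nat.eqb_refl; reflexivity. Qed.

(* first_hit n k = P_k(tau = n), where tau = inf {n >= 1 : X_n = x0}. *)
Fixpoint first_hit (n k : nat) : R :=
  match n with
  | O => 0
  | S O => step k (fun j => if Nat.eqb j x0 then 1 else 0)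
  | S ((S _) as m) => step k (killed (first_hit m))
  end.

Definition hit_prob (N k : nat) : R := sum_f_R0 (fun n => first_hit n k) N.
Definition hit_mean (N k : nat) : R := sum_f_R0 (fun n => INR n * first_hit n k) N.

Lemma first_hit_nonneg n k : 0 <= first_hit n k.
Proof.
  revert k; induction n as [|n IH]; intros k; simpl; [lra|].
  destruct n; apply step_nonneg; intros j; unfold killed; destruct (Nat.eqb j x0); auto; lra.
Qed.

Lemma hit_prob_succ N k :
  hit_prob (S N) k = step k (fun j => if Nat.eqb j x0 then 1 else hit_prob N j).
Proof.
  revert k; induction N as [|N IH]; intros k.
  - unfold hit_prob; simpl. rewrite Rplus_0_l.
    apply step_ext; intros j; destruct (Nat.eqb j x0); reflexivity.
  - unfold hit_prob in *. rewrite tech5, IH.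
    change (first_hit (S (S N)) k) with (step k (killed (first_hit (S N)))).
    rewrite step_add. apply step_ext; intros j. unfold killed.
    destruct (Nat.eqb j x0); [ring|]. rewrite tech5. reflexivity.
Qed.

Lemma hit_mean_succ N k :
  hit_mean (S N) k = hit_prob (S N) k + step k (killed (hit_mean N)).
Proof.
  revert k; induction N as [|N IH]; intros k.
  - rewrite (step_ext k _ (fun _ => 0)); [rewrite step_zero|].
    + unfold hit_mean, hit_prob; simpl. ring.
    + intros j; unfold killed, hit_mean; simpl; destruct (Nat.eqb j x0); ring.
  - unfold hit_mean, hit_prob in *. rewrite (tech5 _ (S N)), (tech5 (fun n => first_hit n k) (S N)), IH.
    change (first_hit (S (S N)) k) with (step k (killed (first_hit (S N)))).
    rewrite step_scal, !Rplus_assoc, !step_add. f_equal.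
    apply step_ext; intros j. unfold killed. destruct (Nat.eqb j x0); [ring|].
    rewrite tech5, (S_INR (S N)). ring.
Qed.

Lemma hit_prob_bounds N k : 0 <= hit_prob N k <= 1.
Proof.
  revert k; induction N as [|N IH]; intros k.
  - unfold hit_prob; simpl; lra.
  - rewrite hit_prob_succ. split.
    + apply step_nonneg. intros j; destruct (Nat.eqb j x0); [lra|apply IH].
    + apply Rle_trans with (step k (fun _ => 1)); [|rewrite step_const1; lra].
      apply step_mono. intros j; destruct (Nat.eqb j x0); [lra|apply IH].
Qed.

Lemma hit_prob_growing k : Un_growing (fun N => hit_prob N k).
Proof. intros N. unfold hit_prob. rewrite tech5. pose proof (first_hit_nonneg (S N) k). lra. Qed.

Lemma hit_mean_growing k : Un_growing (fun N => hit_mean N k).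
Proof.
  intros N. unfold hit_mean. rewrite tech5.
  pose proof (first_hit_nonneg (S N) k); pose proof (pos_INR (S N)). nra.
Qed.

Lemma hit_mean_nonneg N k : 0 <= hit_mean N k.
Proof.
  induction N as [|N IH]; [unfold hit_mean; simpl; lra|].
  pose proof (hit_mean_growing k N). simpl in *. lra.
Qed.

(* A finite mean return time to x0 forces finite mean hitting times of x0
   from every state above it: to return, the chain may first go up. *)
Lemma hit_mean_bounded_above m :
  (forall N, hit_mean N x0 <= m) -> forall i, exists B, forall N, hit_mean N (x0 + i) <= B.
Proof.
  intros Hm i. induction i as [|i [B HB]].
  - exists m. intros N. rewrite Nat.add_0_r. apply Hm.
  - set (y := (x0 + i)%nat) in *. pose proof (up_prob_bounds y).
    exists (B / a y). intros N.
    apply Rmult_le_reg_l with (a y); [lra|].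
    replace (a y * (B / a y)) with B by (field; lra).
    apply Rle_trans with (hit_mean (S N) y); [|apply HB].
    rewrite hit_mean_succ.
    assert (Hup_move : a y * killed (hit_mean N) (S y) <= step y (killed (hit_mean N))).
    { apply step_ge_up. intros j; unfold killed; destruct (Nat.eqb j x0); [lra|apply hit_mean_nonneg]. }
    rewrite killed_ne in Hup_move by (unfold y; lia).
    replace (S y) with (x0 + S i)%nat in Hup_move by (unfold y; lia).
    pose proof (hit_prob_bounds (S N) y). lra.
Qed.

Definition no_outward_drift : Prop := forall y, (2 <= y)%nat -> a y <= 1 - a y.

Section Recurrence.

Hypothesis Hdrift : no_outward_drift.

(* Below the target a function harmonic for the killed chain is constant:
   from 0 the chain must go up, and equal neighbouring values propagate.
   Since it vanishes at x0, it vanishes on [0, x0]. *)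
Lemma harmonic_below_target g :
  (forall k, g k = step k (killed g)) -> forall j, (j <= x0)%nat -> killed g j = 0.
Proof.
  intros Hg. destruct Hup as [H0 H1].
  assert (Hflat : forall k, (S k <= x0)%nat -> killed g (S k) = killed g k).
  { induction k as [|k IH]; intros Hk.
    - rewrite (killed_ne g 0) by lia. rewrite Hg. unfold step. rewrite H0. ring.
    - pose proof (Hg (S k)) as E. rewrite step_succ, <- (IH ltac:(lia)) in E.
      rewrite <- (killed_ne g (S k)) in E by lia.
      pose proof (H1 (S k) ltac:(lia)).
      assert (Hprod : a (S k) * (killed g (S (S k)) - killed g (S k)) = 0) by lra.
      apply Rmult_integral in Hprod; destruct Hprod; lra. }
  assert (Hbelow : forall m, (m <= x0)%nat -> killed g (x0 - m) = 0).
  { induction m as [|m IH]; intros Hm; [rewrite Nat.sub_0_r; apply killed_target|].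
    rewrite <- (Hflat (x0 - S m)%nat) by lia. replace (S (x0 - S m)) with (x0 - m)%nat by lia.
    apply IH; lia. }
  intros j Hj. replace j with (x0 - (x0 - j))%nat by lia. apply Hbelow. lia.
Qed.

(* A function with values in [0,1] that is harmonic for the chain killed at
   x0 vanishes: it does below x0, and above x0 its increments grow, so
   boundedness forces them to vanish. *)
Lemma harmonic_vanishes g :
  (forall k, 0 <= g k <= 1) -> (forall k, g k = step k (killed g)) -> forall k, g k = 0.
Proof.
  intros Hb Hg. destruct Hup as [_ H1].
  set (d := fun i => killed g (x0 + S i) - killed g (x0 + i)).
  assert (Htele : forall n, psum d n = killed g (x0 + n)).
  { induction n as [|n IH]; simpl; [rewrite Nat.add_0_r, killed_target; ring|].
    rewrite IH. unfold d. ring. }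
  assert (Hd : forall i, d i = 0).
  { apply (increments_vanish (fun i => a (x0 + S i)) (fun i => 1 - a (x0 + S i)) d 1).
    - intros i. apply H1; lia.
    - intros i. pose proof (H1 (x0 + S i)%nat ltac:(lia)). lra.
    - intros i Hi. apply Hdrift. lia.
    - intros i. pose proof (Hg (x0 + S i)%nat) as E. unfold d.
      rewrite <- (killed_ne g (x0 + S i)) in E by lia.
      replace (x0 + S i)%nat with (S (x0 + i)) in * by lia.
      replace (x0 + S (S i))%nat with (S (S (x0 + i))) by lia.
      rewrite step_succ in E. lra.
    - unfold d. rewrite Nat.add_0_r, killed_target, killed_ne by lia.
      pose proof (Hb (x0 + 1)%nat). lra.
    - intros n. rewrite Htele. unfold killed.
      destruct (Nat.eqb (x0 + n) x0); [lra|apply Hb]. }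
  assert (Habove : forall n, killed g (x0 + n) = 0).
  { induction n as [|n IH]; [rewrite Nat.add_0_r; apply killed_target|].
    pose proof (Hd n). unfold d in *. lra. }
  assert (Hkilled : forall j, killed g j = 0).
  { intros j. destruct (le_lt_dec j x0).
    - apply harmonic_below_target; assumption.
    - replace j with (x0 + (j - x0))%nat by lia. apply Habove. }
  intros k. rewrite Hg, (step_ext k _ (fun _ => 0)) by exact Hkilled. apply step_zero.
Qed.

(* Every state reaches x0 with probability one: the limit h of the
   truncated hitting probabilities satisfies h = step (1 at x0, h elsewhere),
   so 1 - h is harmonic for the killed chain and therefore vanishes. *)
Lemma hit_prob_limit k : Un_cv (fun N => hit_prob N k) 1.
Proof.
  assert (Hub : forall k, has_ub (fun N => hit_prob N k)).
  { intros k'. exists 1. intros x [i ->]. apply hit_prob_bounds. }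
  set (h := fun k => proj1_sig (growing_cv _ (hit_prob_growing k) (Hub k))).
  assert (Hh : forall k, Un_cv (fun N => hit_prob N k) (h k)).
  { intros k'. unfold h. destruct (growing_cv _ _ _); simpl; auto. }
  assert (Hbounds : forall k, 0 <= h k <= 1).
  { intros k'. split.
    - apply Rle_trans with (hit_prob 0 k'); [apply hit_prob_bounds|].
      apply (growing_ineq (fun N => hit_prob N k')); [apply hit_prob_growing|auto].
    - apply Rle_cv_lim with (fun N => hit_prob N k') (fun _ => 1); auto using cv_const.
      intros; apply hit_prob_bounds. }
  assert (Hfix : forall k, h k = step k (fun j => if Nat.eqb j x0 then 1 else h j)).
  { intros k'. apply UL_sequence with (fun N => hit_prob (S N) k').
    - apply (cv_succ (fun N => hit_prob N k')); auto.
    - apply (Un_cv_ext (fun N => step k' (fun j => if Nat.eqb j x0 then 1 else hit_prob N j))).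
      + intros N; rewrite hit_prob_succ; reflexivity.
      + apply step_cv. intros j. destruct (Nat.eqb j x0); auto using cv_const. }
  assert (Hzero : forall k, 1 - h k = 0).
  { apply harmonic_vanishes.
    - intros k'; pose proof (Hbounds k'); lra.
    - intros k'. rewrite Hfix, <- (step_const1 k') at 1. rewrite step_sub.
      apply step_ext. intros j. unfold killed. destruct (Nat.eqb j x0); ring. }
  replace 1 with (h k) by (pose proof (Hzero k); lra). auto.
Qed.

(* Null recurrence criterion.  b y plays the role of pi y (1 - a y) for the
   reversible measure pi of the chain (pi y a y = pi (y+1) (1 - a (y+1))), so
   the divergence below says that pi has infinite mass in every tail. *)
Definition null_weight (b : nat -> R) : Prop :=
  (forall y, (1 <= y)%nat -> 0 < b y <= 1) /\
  (forall y, (1 <= y)%nat -> b (S y) * (1 - a y) = b y * a y) /\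
  (forall m, (1 <= m)%nat -> diverges (fun j => b (m + j)%nat / (1 - a (m + j)%nat))).

Section NullRecurrence.

Variable b : nat -> R.
Hypothesis Hb : null_weight b.

Lemma killed_mean_poisson (u : nat -> R) :
  (forall i, Un_cv (fun N => killed (hit_mean N) (x0 + i)) (u i)) ->
  forall i, u (S i) = 1 + a (x0 + S i) * u (S (S i)) + (1 - a (x0 + S i)) * u i.
Proof.
  intros Hu i. apply UL_sequence with (fun N => killed (hit_mean (S N)) (x0 + S i)).
  - apply (cv_succ (fun N => killed (hit_mean N) (x0 + S i))). auto.
  - apply (Un_cv_ext (fun N => hit_prob (S N) (x0 + S i) +
        (a (x0 + S i) * killed (hit_mean N) (x0 + S (S i)) +
         (1 - a (x0 + S i)) * killed (hit_mean N) (x0 + i)))).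
    + intros N. rewrite (killed_ne (hit_mean (S N))) by lia. rewrite hit_mean_succ. f_equal.
      replace (x0 + S (S i))%nat with (S (S (x0 + i))) by lia.
      replace (x0 + S i)%nat with (S (x0 + i)) by lia.
      rewrite step_succ. reflexivity.
    + rewrite Rplus_assoc. apply CV_plus.
      * apply (cv_succ (fun N => hit_prob N (x0 + S i))). apply hit_prob_limit.
      * apply CV_plus; apply CV_mult; auto using cv_const.
Qed.

Lemma infinite_mean_return : ~ exists m, infinite_sum (fun n => INR n * first_hit n x0) m.
Proof.
  intros [m Hm]. destruct Hb as [Hb_pos [Hb_bal Hb_div]]. destruct Hup as [_ H1].
  assert (Hbnd : forall N, hit_mean N x0 <= m).
  { apply (growing_ineq (fun N => hit_mean N x0)); [apply hit_mean_growing|exact Hm]. }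
  pose proof (hit_mean_bounded_above m Hbnd) as Habove.
  assert (Hlim : forall i, {l | Un_cv (fun N => killed (hit_mean N) (x0 + i)) l}).
  { intros i. apply growing_cv.
    - intros N. unfold killed. destruct (Nat.eqb (x0 + i) x0); [lra|apply hit_mean_growing].
    - destruct (Habove i) as [B HB]. exists B. intros x [N ->]. unfold killed.
      destruct (Nat.eqb (x0 + i) x0); [|apply HB].
      pose proof (hit_mean_nonneg N (x0 + i)); pose proof (HB N); lra. }
  set (u := fun i => proj1_sig (Hlim i)).
  assert (Hu : forall i, Un_cv (fun N => killed (hit_mean N) (x0 + i)) (u i)).
  { intros i. unfold u. destruct (Hlim i); auto. }
  apply (no_nonneg_poisson_solution (fun i => a (x0 + S i)) (fun i => b (x0 + S i)) u).
  - intros i. apply H1. lia.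
  - intros i. apply Hb_pos. lia.
  - intros i. replace (x0 + S (S i))%nat with (S (x0 + S i)) by lia. apply Hb_bal. lia.
  - apply (diverges_ext (fun j => b (S x0 + j) / (1 - a (S x0 + j)))); [|apply Hb_div; lia].
    intros j. replace (S x0 + j)%nat with (x0 + S j)%nat by lia. reflexivity.
  - intros i. apply Rle_cv_lim with (fun _ => 0) (fun N => killed (hit_mean N) (x0 + i));
      auto using cv_const.
    intros N. unfold killed. destruct (Nat.eqb (x0 + i) x0); [lra|apply hit_mean_nonneg].
  - apply killed_mean_poisson. exact Hu.
Qed.

End NullRecurrence.

End Recurrence.

(* Positive recurrence criterion.  D k is the increment V k - V (k-1) of a
   Foster-Lyapunov function V, i.e. step V <= V - 1 at every k >= 1. *)
Definition lyapunov_increments (D : nat -> R) : Prop :=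
  (forall k, 0 <= D k) /\ (forall k, (1 <= k)%nat -> 1 <= (1 - a k) * D k - a k * D (S k)).

Section PositiveRecurrence.

Variable D : nat -> R.
Hypothesis HD : lyapunov_increments D.

(* climb_time k = E_k[time to reach k+1], by first-step analysis. *)
Fixpoint climb_time (k : nat) : R :=
  match k with O => 1 | S k' => (1 + (1 - a (S k')) * climb_time k') / a (S k') end.

Lemma climb_time_nonneg k : 0 <= climb_time k.
Proof.
  induction k as [|k IH]; simpl; [lra|]. pose proof (up_prob_bounds (S k)).
  apply Rmult_le_pos; [nra|left; apply Rinv_0_lt_compat; lra].
Qed.

Lemma climb_time_succ k : a (S k) * climb_time (S k) = 1 + (1 - a (S k)) * climb_time k.
Proof. simpl. pose proof (up_prob_bounds (S k)). field. lra. Qed.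

Fixpoint up_sum (n : nat) : R :=
  match n with O => 0 | S n' => up_sum n' + D (x0 + S n') end.
Fixpoint down_sum (n : nat) : R :=
  match n with O => 0 | S n' => down_sum n' + climb_time (x0 - S n') end.

(* An explicit upper bound for the mean hitting time of x0: climbing times
   below x0, the Lyapunov function above x0, first-step analysis at x0. *)
Definition supersol (y : nat) : R :=
  if Nat.ltb y x0 then down_sum (x0 - y)
  else if Nat.eqb y x0 then
    1 + a x0 * D (S x0) + (1 - a x0) * climb_time (pred x0)
  else up_sum (y - x0).

Lemma supersol_below y : (y < x0)%nat -> supersol y = down_sum (x0 - y).
Proof. intros H; unfold supersol. destruct (Nat.ltb_spec y x0); [reflexivity|lia]. Qed.

Lemma supersol_above n : supersol (x0 + S n) = up_sum (S n).
Proof.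
  unfold supersol. destruct (Nat.ltb_spec (x0 + S n) x0); [lia|].
  destruct (Nat.eqb_spec (x0 + S n) x0); [lia|]. f_equal; lia.
Qed.

Lemma supersol_nonneg y : 0 <= supersol y.
Proof.
  destruct HD as [HD0 _].
  assert (Hup_sum : forall n, 0 <= up_sum n).
  { induction n; simpl; [lra|]. pose proof (HD0 (x0 + S n)%nat); lra. }
  assert (Hdown_sum : forall n, 0 <= down_sum n).
  { induction n; simpl; [lra|]. pose proof (climb_time_nonneg (x0 - S n)); lra. }
  unfold supersol. destruct (Nat.ltb y x0); [auto|].
  destruct (Nat.eqb y x0); [|auto].
  pose proof (up_prob_bounds x0); pose proof (HD0 (S x0)); pose proof (climb_time_nonneg (pred x0)).
  nra.
Qed.

Lemma supersol_super_below y : (y < x0)%nat -> 1 + step y (killed supersol) <= supersol y.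
Proof.
  intros Hlt.
  assert (Hnext : killed supersol (S y) = supersol y - climb_time y).
  { rewrite (supersol_below y Hlt).
    destruct (Nat.eq_dec (S y) x0) as [E|E].
    - rewrite E, killed_target. replace (x0 - y)%nat with 1%nat by lia.
      simpl. replace (x0 - 1)%nat with y by lia. ring.
    - rewrite killed_ne, supersol_below by lia.
      replace (x0 - y)%nat with (S (x0 - S y)) by lia. simpl down_sum at 2.
      replace (x0 - S (x0 - S y))%nat with y by lia. ring. }
  destruct y as [|y'].
  - unfold step. rewrite Hnext. destruct Hup as [H0 _]. rewrite H0. simpl. lra.
  - rewrite step_succ, Hnext, killed_ne by lia. rewrite !supersol_below by lia.
    replace (x0 - y')%nat with (S (x0 - S y')) by lia. simpl down_sum at 2.
    replace (x0 - S (x0 - S y'))%nat with y' by lia.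
    pose proof (climb_time_succ y'). lra.
Qed.

Lemma supersol_super_at : 1 + step x0 (killed supersol) <= supersol x0.
Proof.
  unfold supersol at 2. rewrite Nat.ltb_irrefl, Nat.eqb_refl.
  assert (Hnext : killed supersol (S x0) = D (S x0)).
  { rewrite killed_ne by lia. replace (S x0) with (x0 + 1)%nat by lia.
    rewrite supersol_above. simpl. replace (x0 + 1)%nat with (S x0) by lia. ring. }
  assert (Hprev : killed supersol (pred x0) <= climb_time (pred x0)).
  { destruct (Nat.eq_dec (pred x0) x0) as [E|E].
    - rewrite E, killed_target. apply climb_time_nonneg.
    - rewrite killed_ne, supersol_below by lia. replace (x0 - pred x0)%nat with 1%nat by lia.
      simpl. replace (x0 - 1)%nat with (pred x0) by lia. lra. }
  rewrite step_pred, Hnext. pose proof (up_prob_bounds x0). nra.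
Qed.

Lemma supersol_super_above n : 1 + step (x0 + S n) (killed supersol) <= supersol (x0 + S n).
Proof.
  destruct HD as [_ HD1].
  replace (x0 + S n)%nat with (S (x0 + n)) by lia. rewrite step_succ.
  assert (Hnext : killed supersol (S (S (x0 + n))) = supersol (S (x0 + n)) + D (S (S (x0 + n)))).
  { rewrite killed_ne by lia. replace (S (S (x0 + n))) with (x0 + S (S n))%nat by lia.
    replace (S (x0 + n)) with (x0 + S n)%nat by lia. rewrite !supersol_above. simpl. ring. }
  assert (Hprev : killed supersol (x0 + n)%nat = supersol (S (x0 + n)) - D (S (x0 + n))).
  { replace (S (x0 + n)) with (x0 + S n)%nat by lia. rewrite supersol_above. simpl up_sum.
    destruct n as [|n'].
    - rewrite Nat.add_0_r, killed_target. simpl. ring.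
    - rewrite killed_ne, supersol_above by lia. ring. }
  rewrite Hnext, Hprev. pose proof (HD1 (S (x0 + n)) ltac:(lia)). lra.
Qed.

Lemma supersol_super y : 1 + step y (killed supersol) <= supersol y.
Proof.
  destruct (lt_eq_lt_dec y x0) as [[Hlt|E]|Hgt].
  - apply supersol_super_below, Hlt.
  - rewrite E. apply supersol_super_at.
  - replace y with (x0 + S (y - S x0))%nat by lia. apply supersol_super_above.
Qed.

Lemma hit_mean_le_supersol N y : hit_mean N y <= supersol y.
Proof.
  revert y; induction N as [|N IH]; intros y.
  - unfold hit_mean; simpl. rewrite Rmult_0_l. apply supersol_nonneg.
  - rewrite hit_mean_succ. apply Rle_trans with (1 + step y (killed supersol)); [|apply supersol_super].
    apply Rplus_le_compat; [apply hit_prob_bounds|].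
    apply step_mono. intros j; unfold killed. destruct (Nat.eqb j x0); [lra|apply IH].
Qed.

Lemma finite_mean_return : exists m, infinite_sum (fun n => INR n * first_hit n x0) m.
Proof.
  assert (Hub : has_ub (fun N => hit_mean N x0)).
  { exists (supersol x0). intros x [i ->]. apply hit_mean_le_supersol. }
  destruct (growing_cv _ (hit_mean_growing x0) Hub) as [l Hl]. exists l. exact Hl.
Qed.

End PositiveRecurrence.

End BirthDeathChain.

Lemma sumR_ext {A : Type} (f g : A -> R) l : (forall z, f z = g z) -> sumR f l = sumR g l.
Proof. intros H; induction l as [|z l IH]; simpl; [reflexivity|rewrite H, IH; reflexivity]. Qed.

Lemma infinite_sum_ext (f g : nat -> R) l :
  (forall n, f n = g n) -> infinite_sum f l -> infinite_sum g l.
Proof.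
  intros Hfg Hf. apply (Un_cv_ext (fun N => sum_f_R0 f N)); [|exact Hf].
  intros N. apply sum_eq. intros i _. apply Hfg.
Qed.

Section Embedding.

Variable M : ctmc.
Variable e : nat -> st M.
Variable a : nat -> R.

Definition bd_embedding : Prop :=
  (forall s, exists k, e k = s) /\ (forall i j, e i = e j -> i = j) /\
  (forall k, targets M (e k) = e (S k) :: match k with O => [] | S k' => [e k'] end) /\
  (forall k t, jump_p M (e k) t = (if st_eq_dec M t (e (S k)) then a k else 0) +
      match k with O => 0 | S k' => if st_eq_dec M t (e k') then 1 - a k else 0 end).

Hypothesis He : bd_embedding.

Lemma embedding_eq_dec i j (u v : R) :
  (if st_eq_dec M (e i) (e j) then u else v) = (if Nat.eqb i j then u else v).
Proof.
  destruct He as [_ [Hinj _]].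
  destruct (st_eq_dec M (e i) (e j)) as [E|E]; destruct (Nat.eqb_spec i j) as [F|F]; auto.
  - apply Hinj in E; lia.
  - subst; congruence.
Qed.

Lemma embedding_jump_sum k (G : st M -> R) :
  sumR (fun z => jump_p M (e k) z * G z) (targets M (e k)) = step a k (fun j => G (e j)).
Proof.
  destruct He as [_ [_ [Htargets Hjump]]].
  rewrite Htargets. unfold step, sumR. destruct k as [|k]; cbn [fold_right]; rewrite !Hjump;
    rewrite !embedding_eq_dec, ?Nat.eqb_refl; [ring|].
  destruct (Nat.eqb_spec (S (S k)) k); [lia|]. destruct (Nat.eqb_spec k (S (S k))); [lia|]. ring.
Qed.

Lemma first_passage_embedding n k x0 : first_passage M (e x0) n (e k) = first_hit a x0 n k.
Proof.
  destruct He as [_ [_ [_ Hjump]]].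
  revert k; induction n as [|n IH]; intros k; [reflexivity|]. destruct n as [|n].
  - cbn [first_passage first_hit]. rewrite Hjump. unfold step.
    rewrite !embedding_eq_dec, (Nat.eqb_sym x0 (S k)).
    destruct (Nat.eqb (S k) x0), k as [|k]; try ring;
      rewrite embedding_eq_dec, (Nat.eqb_sym x0 k); destruct (Nat.eqb k x0); ring.
  - cbn [first_passage]. change (first_hit a x0 (S (S n)) k) with (step a k (killed x0 (first_hit a x0 (S n)))).
    rewrite (sumR_ext _ (fun z => jump_p M (e k) z *
        (if st_eq_dec M z (e x0) then 0 else first_passage M (e x0) (S n) z))).
    + rewrite embedding_jump_sum. apply step_ext. intros j.
      rewrite embedding_eq_dec, IH. reflexivity.
    + intros z. destruct (st_eq_dec M z (e x0)); [ring|reflexivity].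
Qed.

Lemma embedding_recurrent : up_probs a -> no_outward_drift a -> forall x, recurrent_state M x.
Proof.
  intros Hup Hdrift x. destruct He as [Hsurj _]. destruct (Hsurj x) as [x0 <-].
  apply (infinite_sum_ext (fun n => first_hit a x0 n x0)).
  - intros n. symmetry. apply first_passage_embedding.
  - apply hit_prob_limit; assumption.
Qed.

Lemma embedding_positive D :
  up_probs a -> no_outward_drift a -> lyapunov_increments a D -> positive_recurrent M.
Proof.
  intros Hup Hdrift HD x. split; [apply embedding_recurrent; assumption|].
  destruct He as [Hsurj _]. destruct (Hsurj x) as [x0 <-].
  destruct (finite_mean_return a Hup x0 D HD) as [m Hm]. exists m.
  apply (infinite_sum_ext (fun n => INR n * first_hit a x0 n x0)); [|exact Hm].
  intros n. rewrite first_passage_embedding. reflexivity.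
Qed.

Lemma embedding_null b :
  up_probs a -> no_outward_drift a -> null_weight a b -> null_recurrent M.
Proof.
  intros Hup Hdrift Hb x. split; [apply embedding_recurrent; assumption|].
  destruct He as [Hsurj _]. destruct (Hsurj x) as [x0 <-]. intros [m Hm].
  apply (infinite_mean_return a Hup x0 Hdrift b Hb). exists m.
  apply (infinite_sum_ext (fun n => INR n * first_passage M (e x0) n (e x0))); [|exact Hm].
  intros n. rewrite first_passage_embedding. reflexivity.
Qed.

End Embedding.

(* (m + n) / m <= exp (1/m + ... + 1/(m+n-1)), from 1 + x <= exp x. *)
Lemma harmonic_exp_bound m n : (1 <= m)%nat ->
  INR (m + n) / INR m <= exp (psum (fun j => 1 / INR (m + j)) n).
Proof.
  intros Hm. assert (0 < INR m) by (apply lt_0_INR; lia).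
  induction n as [|n IH].
  - simpl. rewrite exp_0, Nat.add_0_r. right; field; lra.
  - simpl psum. rewrite exp_plus.
    assert (0 < INR (m + n)) by (apply lt_0_INR; lia).
    pose proof (exp_ineq1_le (1 / INR (m + n))).
    replace (INR (m + S n) / INR m) with ((INR (m + n) / INR m) * (1 + 1 / INR (m + n)))
      by (rewrite Nat.add_succ_r, S_INR; field; lra).
    assert (0 <= 1 / INR (m + n)) by (apply Rmult_le_pos; [lra|left; apply Rinv_0_lt_compat; lra]).
    apply Rmult_le_compat; try lra.
    apply Rmult_le_pos; [apply pos_INR|left; apply Rinv_0_lt_compat; lra].
Qed.

Lemma harmonic_diverges m : (1 <= m)%nat -> diverges (fun j => 1 / INR (m + j)).
Proof.
  intros Hm M. assert (0 < INR m) by (apply lt_0_INR; lia).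
  destruct (INR_archimed 1 (INR m * exp M)) as [n Hn]; [lra|].
  exists n. destruct (Rle_dec M (psum (fun j => 1 / INR (m + j)) n)) as [|Hlt]; [assumption|].
  exfalso. pose proof (harmonic_exp_bound m n Hm) as Hexp.
  assert (exp (psum (fun j => 1 / INR (m + j)) n) < exp M) by (apply exp_increasing; lra).
  rewrite plus_INR in Hexp.
  assert ((INR m + INR n) / INR m > exp M).
  { apply Rmult_gt_reg_l with (INR m); [assumption|].
    replace (INR m * ((INR m + INR n) / INR m)) with (INR m + INR n) by (field; lra).
    pose proof (pos_INR n). lra. }
  lra.
Qed.

(* The birth-death process: its jump chain is the birth-death chain with
   up-probabilities a_bd (the total rate out of every state is 1). *)
Definition a_bd (k : nat) : R :=
  match k with O => 1 | S _ => (2 * INR k - 1) / (4 * INR k) end.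

Lemma a_bd_pos k : (1 <= k)%nat -> a_bd k = (2 * INR k - 1) / (4 * INR k).
Proof. intros H; destruct k; [lia|reflexivity]. Qed.

Lemma targets_BD k : targets BD k = S k :: match k with O => [] | S k' => [k'] end.
Proof.
  destruct k as [|k]; [reflexivity|].
  cbv beta iota delta [targets nodup filter BD st st_eq_dec cand Nat.pred].
  destruct (in_dec Nat.eq_dec (S (S k)) [k]) as [Hi|Hi]; [simpl in Hi; lia|].
  destruct (in_dec Nat.eq_dec k []) as [Hi'|Hi']; [destruct Hi'|].
  destruct (Nat.eq_dec (S (S k)) (S k)); [lia|].
  destruct (Nat.eq_dec k (S k)); [lia|].
  reflexivity.
Qed.

Lemma qbd_decomp k t : qbd k t =
  (if Nat.eq_dec t (S k) then a_bd k else 0) +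
  match k with O => 0 | S k' => if Nat.eq_dec t k' then 1 - a_bd k else 0 end.
Proof.
  unfold qbd, a_bd. destruct k as [|k].
  - destruct (Nat.eq_dec t 1); destruct (Nat.eqb_spec t 1); try lia; ring.
  - destruct (Nat.eq_dec t (S (S k))) as [E|E].
    + subst t. rewrite Nat.eqb_refl. destruct (Nat.eq_dec (S (S k)) k); [lia|]. ring.
    + destruct (Nat.eqb_spec t (S (S k))); [lia|].
      destruct (Nat.eq_dec t k) as [F|F].
      * subst t. rewrite Nat.eqb_refl. ring.
      * destruct (Nat.eqb_spec (S t) (S k)); [lia|]. ring.
Qed.

Lemma out_rate_BD k : out_rate BD k = 1.
Proof.
  unfold out_rate. rewrite targets_BD. cbn [rate BD]. unfold sumR.
  destruct k as [|k]; cbn [fold_right]; rewrite !qbd_decomp;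
    destruct (Nat.eq_dec (S _) (S _)) as [_|]; try lia; [simpl; ring|].
  destruct (Nat.eq_dec (S (S k)) k); [lia|].
  destruct (Nat.eq_dec k (S (S k))); [lia|].
  destruct (Nat.eq_dec k k); [|lia]. ring.
Qed.

Lemma BD_embedding : bd_embedding BD (fun k => k) a_bd.
Proof.
  split; [intros s; exists s; reflexivity|split; [auto|split; [apply targets_BD|]]].
  intros k t. unfold jump_p. cbn [st_eq_dec BD rate]. rewrite out_rate_BD, Rdiv_1_r.
  destruct (Nat.eq_dec t k) as [E|E]; [|apply qbd_decomp].
  subst t. destruct (Nat.eq_dec k (S k)); [lia|]. destruct k as [|k]; [ring|].
  destruct (Nat.eq_dec (S k) k); [lia|]. ring.
Qed.

Lemma BD_up_probs : up_probs a_bd.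
Proof.
  split; [reflexivity|]. intros k Hk. rewrite a_bd_pos by assumption.
  assert (1 <= INR k) by (apply (le_INR 1); lia).
  split; [apply Rmult_lt_0_compat; [lra|apply Rinv_0_lt_compat; lra]|].
  apply Rmult_lt_reg_r with (4 * INR k); [lra|]. field_simplify; lra.
Qed.

Lemma BD_no_outward_drift : no_outward_drift a_bd.
Proof.
  intros y Hy. rewrite a_bd_pos by lia. assert (1 <= INR y) by (apply (le_INR 1); lia).
  apply Rmult_le_reg_r with (4 * INR y); [lra|]. field_simplify; lra.
Qed.

(* With b y = 1 / (2y - 1) one gets b y / (1 - a y) = 4y / (4y^2 - 1) >= 1/y,
   whose series diverges like the harmonic series. *)
Lemma BD_null_weight : null_weight a_bd (fun y => 1 / (2 * INR y - 1)).
Proof.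
  split; [|split].
  - intros y Hy. assert (1 <= INR y) by (apply (le_INR 1); lia). split.
    + apply Rmult_lt_0_compat; [lra|apply Rinv_0_lt_compat; lra].
    + apply Rmult_le_reg_r with (2 * INR y - 1); [lra|]. field_simplify; lra.
  - intros y Hy. rewrite a_bd_pos by auto. assert (1 <= INR y) by (apply (le_INR 1); lia).
    rewrite S_INR. field. lra.
  - intros m Hm. apply (diverges_le (fun j => 1 / INR (m + j))); [|apply harmonic_diverges, Hm].
    intros j. rewrite a_bd_pos by lia. assert (1 <= INR (m + j)) by (apply (le_INR 1); lia).
    set (t := INR (m + j)) in *.
    replace (1 / (2 * t - 1) / (1 - (2 * t - 1) / (4 * t)))
      with (4 * t / ((2 * t - 1) * (2 * t + 1))) by (field; lra).
    apply Rmult_le_reg_r with (t * ((2 * t - 1) * (2 * t + 1))).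
    { apply Rmult_lt_0_compat; [lra|]. apply Rmult_lt_0_compat; lra. }
    field_simplify; [|lra|lra]. nra.
Qed.

Lemma BD_null_recurrent : null_recurrent BD.
Proof.
  apply (embedding_null BD (fun k => k) a_bd BD_embedding _ BD_up_probs BD_no_outward_drift
           BD_null_weight).
Qed.

Definition widen_up (x : nat) : R := qbd (S x) (S (S x)).       (* (x,x+1) -> (x,x+2) *)
Definition widen_down (x : nat) : R := qbd (S x) x.            (* (x+1,x+2) -> (x,x+2) *)
Definition close_up (x : nat) : R := qbd x (S x).               (* (x,x+2) -> (x+1,x+2) *)
Definition close_down (x : nat) : R := qbd (S (S x)) (S x).     (* (x,x+2) -> (x,x+1) *)

Ltac eqb_cases := repeat match goal with |- context [Nat.eqb ?x ?y] =>
  destruct (Nat.eqb_spec x y); try lia end.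

Ltac spst_cases := repeat match goal with |- context [spst_eq_dec ?u ?v] =>
  destruct (spst_eq_dec u v) as [?E|?E]; try subst; try congruence;
  try (match goal with H : (_, _) = (_, _) |- _ => inversion H; lia end) end.

Lemma config_adjacent x : config (x, false) = (x, S x).
Proof. simpl. f_equal. lia. Qed.

Lemma config_gap x : config (x, true) = (x, S (S x)).
Proof. simpl. f_equal. lia. Qed.

Lemma decode_pair p q : decode (p, q) =
  if Nat.eqb q (S p) then Some (p, false) else if Nat.eqb q (S (S p)) then Some (p, true) else None.
Proof. unfold decode. eqb_cases; reflexivity. Qed.

Lemma pair_eqb_config p q t : pair_eqb (p, q) (config t) =
  match decode (p, q) with Some s => if spst_eq_dec s t then true else false | None => false end.
Proof.
  destruct t as [y [|]]; unfold pair_eqb, config, decode; cbn [fst snd];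
  eqb_cases; cbn [andb]; try reflexivity;
  match goal with |- context [spst_eq_dec ?u ?v] => destruct (spst_eq_dec u v) as [E|E] end;
  try reflexivity; try (inversion E; lia); try (exfalso; apply E; f_equal; lia).
Qed.

Lemma qspider_adjacent x t : qspider (x, false) t =
  (if spst_eq_dec t (x, true) then widen_up x else 0) +
  match x with O => 0 | S x' => if spst_eq_dec t (x', true) then widen_down x' else 0 end.
Proof.
  unfold qspider. rewrite config_adjacent. unfold leg_moves, sumR, widen_up, widen_down.
  destruct x as [|x']; cbn [fold_right app fst snd];
    rewrite !pair_eqb_config, !decode_pair; eqb_cases; spst_cases; ring.
Qed.

Lemma qspider_gap x t : qspider (x, true) t =
  (if spst_eq_dec t (S x, false) then close_up x else 0) +
  (if spst_eq_dec t (x, false) then close_down x else 0).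
Proof.
  unfold qspider. rewrite config_gap. unfold leg_moves, sumR, close_up, close_down.
  destruct x as [|x']; cbn [fold_right app fst snd];
    rewrite !pair_eqb_config, !decode_pair; eqb_cases; spst_cases; ring.
Qed.

Lemma if_dec_ne {A B : Type} (d : forall x y : A, {x = y} + {x <> y}) x y (u v : B) :
  x <> y -> (if d x y then u else v) = v.
Proof. intros H; destruct (d x y); tauto. Qed.

Lemma if_dec_eq {A B : Type} (d : forall x y : A, {x = y} + {x <> y}) x (u v : B) :
  (if d x x then u else v) = u.
Proof. destruct (d x x); tauto. Qed.

Lemma if_not_in {A B : Type} (d : forall x y : A, {x = y} + {x <> y}) x l (u v : B) :
  ~ In x l -> (if in_dec d x l then u else v) = v.
Proof. intros H; destruct (in_dec d x l); tauto. Qed.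

Ltac not_in := let H := fresh in intro H; simpl in H;
  repeat (destruct H as [H|H]; [inversion H; lia|]); exact H.
Ltac spst_neq := let H := fresh in intro H; inversion H; lia.

Lemma targets_origin : targets SPIDER (0%nat, false) = [(0%nat, true)].
Proof. reflexivity. Qed.

Lemma targets_adjacent x : targets SPIDER (S x, false) = [(S x, true); (x, true)].
Proof.
  unfold targets. cbn [SPIDER cand st_eq_dec]. unfold spider_cand.
  rewrite config_adjacent. unfold leg_moves.
  cbn [flat_map app fst]. rewrite !decode_pair. eqb_cases. cbn [app nodup].
  rewrite !if_not_in by not_in. cbn [filter].
  rewrite !if_dec_ne by spst_neq. reflexivity.
Qed.

Lemma targets_gap x : targets SPIDER (x, true) = [(S x, false); (x, false)].
Proof.
  unfold targets. cbn [SPIDER cand st_eq_dec]. unfold spider_cand.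
  rewrite config_gap. unfold leg_moves.
  destruct x as [|x']; cbn [flat_map app fst]; rewrite !decode_pair; eqb_cases; cbn [app nodup];
    rewrite !if_not_in by not_in; cbn [filter]; rewrite !if_dec_ne by spst_neq; reflexivity.
Qed.

Lemma widen_up_eq x : widen_up x = (2 * INR x + 1) / (4 * INR x + 4).
Proof. unfold widen_up, qbd. rewrite Nat.eqb_refl, S_INR. pose proof (pos_INR x). field. lra. Qed.

Lemma widen_down_eq x : widen_down x = (2 * INR x + 3) / (4 * INR x + 4).
Proof.
  unfold widen_down, qbd. destruct (Nat.eqb_spec x (S (S x))); [lia|]. rewrite Nat.eqb_refl, S_INR.
  pose proof (pos_INR x). field. lra.
Qed.

Lemma close_down_eq x : close_down x = (2 * INR x + 5) / (4 * INR x + 8).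
Proof.
  unfold close_down, qbd. destruct (Nat.eqb_spec (S x) (S (S (S x)))); [lia|]. rewrite Nat.eqb_refl.
  rewrite !S_INR. pose proof (pos_INR x). field. lra.
Qed.

Lemma close_up_0 : close_up 0 = 1.
Proof. reflexivity. Qed.

Lemma close_up_succ n : close_up (S n) = widen_up n.
Proof. reflexivity. Qed.

Lemma frac_pos p q : 0 < p -> 0 < q -> 0 < p / q.
Proof. intros; apply Rmult_lt_0_compat; [auto|apply Rinv_0_lt_compat; auto]. Qed.

Lemma widen_up_pos x : 0 < widen_up x.
Proof. rewrite widen_up_eq. pose proof (pos_INR x). apply frac_pos; lra. Qed.

Lemma widen_down_pos x : 0 < widen_down x.
Proof. rewrite widen_down_eq. pose proof (pos_INR x). apply frac_pos; lra. Qed.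

Lemma close_down_pos x : 0 < close_down x.
Proof. rewrite close_down_eq. pose proof (pos_INR x). apply frac_pos; lra. Qed.

Lemma close_up_pos x : 0 < close_up x.
Proof. destruct x; [rewrite close_up_0; lra|rewrite close_up_succ; apply widen_up_pos]. Qed.

Lemma jump_p_two_targets (M : ctmc) x y z u d :
  x <> y -> x <> z -> y <> z -> targets M x = [y; z] -> 0 < u + d ->
  (forall t, rate M x t = (if st_eq_dec M t y then u else 0) + (if st_eq_dec M t z then d else 0)) ->
  forall t, jump_p M x t =
    (if st_eq_dec M t y then u / (u + d) else 0) + (if st_eq_dec M t z then 1 - u / (u + d) else 0).
Proof.
  intros Hxy Hxz Hyz Htargets Hpos Hrate t. unfold jump_p, out_rate. rewrite Htargets.
  unfold sumR. cbn [fold_right]. rewrite !Hrate, !if_dec_eq.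
  rewrite (if_dec_ne _ y z), (if_dec_ne _ z y) by congruence.
  destruct (st_eq_dec M t x) as [E|E].
  - subst t. rewrite !if_dec_ne by congruence. ring.
  - destruct (st_eq_dec M t y), (st_eq_dec M t z); try congruence; field; lra.
Qed.

Definition spider_up (s : spst) : R :=
  let (x, gap) := s in
  if gap then close_up x / (close_up x + close_down x)
  else match x with O => 1 | S x' => widen_up x / (widen_up x + widen_down x') end.

Lemma jump_origin t :
  jump_p SPIDER (0%nat, false) t = if spst_eq_dec t (0%nat, true) then 1 else 0.
Proof.
  unfold jump_p, out_rate. rewrite targets_origin. cbn [st_eq_dec SPIDER rate].
  unfold sumR; cbn [fold_right]. rewrite !qspider_adjacent, if_dec_eq. pose proof (widen_up_pos 0).
  destruct (spst_eq_dec t (0%nat, false)) as [E|E].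
  - subst. rewrite if_dec_ne by spst_neq. reflexivity.
  - destruct (spst_eq_dec t (0%nat, true)); field; lra.
Qed.

Lemma jump_adjacent x t : jump_p SPIDER (S x, false) t =
  (if spst_eq_dec t (S x, true) then spider_up (S x, false) else 0) +
  (if spst_eq_dec t (x, true) then 1 - spider_up (S x, false) else 0).
Proof.
  apply (jump_p_two_targets SPIDER); try spst_neq; [apply targets_adjacent| |apply qspider_adjacent].
  pose proof (widen_up_pos (S x)); pose proof (widen_down_pos x). lra.
Qed.

Lemma jump_gap x t : jump_p SPIDER (x, true) t =
  (if spst_eq_dec t (S x, false) then spider_up (x, true) else 0) +
  (if spst_eq_dec t (x, false) then 1 - spider_up (x, true) else 0).
Proof.
  apply (jump_p_two_targets SPIDER); try spst_neq; [apply targets_gap| |apply qspider_gap].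
  pose proof (close_up_pos x); pose proof (close_down_pos x). lra.
Qed.

(* Enumeration of the spider's states along its state graph, which is a
   line: 2x <-> (x, x+1) and 2x+1 <-> (x, x+2). *)
Fixpoint spider_state (k : nat) : spst :=
  match k with
  | O => (0%nat, false)
  | S k' => let (x, gap) := spider_state k' in if gap then (S x, false) else (x, true)
  end.

Definition spider_index (s : spst) : nat := let (x, gap) := s in (2 * x + if gap then 1 else 0)%nat.

Lemma spider_index_state k : spider_index (spider_state k) = k.
Proof.
  induction k as [|k IH]; [reflexivity|]. cbn [spider_state].
  destruct (spider_state k) as [x [|]]; simpl in *; lia.
Qed.

Lemma spider_state_index s : spider_state (spider_index s) = s.
Proof.
  assert (H : forall x, spider_state (spider_index (x, false)) = (x, false) /\
                        spider_state (spider_index (x, true)) = (x, true)).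
  { induction x as [|x [_ IH]]; [split; reflexivity|].
    assert (Hadj : spider_state (spider_index (S x, false)) = (S x, false)).
    { replace (spider_index (S x, false)) with (S (spider_index (x, true))) by (simpl; lia).
      cbn [spider_state]. rewrite IH. reflexivity. }
    split; [exact Hadj|].
    replace (spider_index (S x, true)) with (S (spider_index (S x, false))) by (simpl; lia).
    cbn [spider_state]. rewrite Hadj. reflexivity. }
  destruct s as [x [|]]; apply H.
Qed.

Lemma spider_state_eq k s : spider_state k = s -> k = spider_index s.
Proof. intros E. rewrite <- E. symmetry. apply spider_index_state. Qed.

Definition a_spider (k : nat) : R := spider_up (spider_state k).

Lemma SPIDER_embedding : bd_embedding SPIDER spider_state a_spider.
Proof.
  split; [|split; [|split]].
  - intros s. exists (spider_index s). apply spider_state_index.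
  - intros i j E. rewrite <- (spider_index_state i), <- (spider_index_state j), E. reflexivity.
  - intros [|k]; [reflexivity|]. cbn [spider_state].
    destruct (spider_state k) as [x [|]]; [apply targets_adjacent|apply targets_gap].
  - intros [|k] t; cbn [st_eq_dec SPIDER]; unfold a_spider.
    + cbn [spider_state]. rewrite jump_origin. simpl spider_up. ring.
    + cbn [spider_state]. destruct (spider_state k) as [x [|]]; [apply jump_adjacent|apply jump_gap].
Qed.

Lemma frac_bounds u d : 0 < u -> 0 < d -> 0 < u / (u + d) < 1.
Proof.
  intros Hu Hd. split; [apply frac_pos; lra|].
  apply Rmult_lt_reg_r with (u + d); [lra|]. field_simplify; lra.
Qed.

Lemma frac_le p q r s : 0 < q -> 0 < s -> p * s <= r * q -> p / q <= r / s.
Proof.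
  intros Hq Hs H. apply Rmult_le_reg_r with (q * s); [nra|].
  replace (p / q * (q * s)) with (p * s) by (field; lra).
  replace (r / s * (q * s)) with (r * q) by (field; lra). exact H.
Qed.

Lemma SPIDER_up_probs : up_probs a_spider.
Proof.
  split; [reflexivity|]. intros k Hk. unfold a_spider.
  destruct (spider_state k) as [[|x] [|]] eqn:E; cbn [spider_up].
  - apply frac_bounds; [apply close_up_pos|apply close_down_pos].
  - apply spider_state_eq in E. simpl in E. lia.
  - apply frac_bounds; [apply close_up_pos|apply close_down_pos].
  - apply frac_bounds; [apply widen_up_pos|apply widen_down_pos].
Qed.

Lemma ratio_le_half u d : 0 < u -> u <= d -> u / (u + d) <= 1 - u / (u + d).
Proof.
  intros Hu Hud. replace (1 - u / (u + d)) with (d / (u + d)) by (field; lra).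
  apply frac_le; nra.
Qed.

Lemma SPIDER_no_outward_drift : no_outward_drift a_spider.
Proof.
  intros y Hy. unfold a_spider.
  destruct (spider_state y) as [[|x] [|]] eqn:E; cbn [spider_up];
    pose proof (spider_state_eq _ _ E) as Hidx; simpl in Hidx; try lia;
    pose proof (pos_INR x); apply ratio_le_half.
  - apply close_up_pos.
  - rewrite close_up_succ, widen_up_eq, close_down_eq, S_INR. apply frac_le; nra.
  - apply widen_up_pos.
  - rewrite widen_up_eq, widen_down_eq, S_INR. apply frac_le; nra.
Qed.

(* The spider's jump chain has drift about -1/k at state k, so the quadratic
   V k ~ k^2, with increments D_spider, is a Foster-Lyapunov function.  (For
   the birth-death process the drift -1/(2x) is too weak for this.) *)
Definition D_spider (k : nat) : R := match k with 1%nat => 11 | _ => 2 * INR k + 1 end.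

Lemma D_spider_generic k : k <> 1%nat -> D_spider k = 2 * INR k + 1.
Proof. intros H. destruct k as [|[|k]]; [reflexivity|lia|reflexivity]. Qed.

Lemma lyapunov_ratio u d D1 D2 : 0 < u -> 0 < d -> u + d <= d * D1 - u * D2 ->
  1 <= (1 - u / (u + d)) * D1 - u / (u + d) * D2.
Proof.
  intros Hu Hd H. apply Rmult_le_reg_r with (u + d); [lra|].
  replace (((1 - u / (u + d)) * D1 - u / (u + d) * D2) * (u + d)) with (d * D1 - u * D2)
    by (field; lra).
  lra.
Qed.

Lemma SPIDER_lyapunov : lyapunov_increments a_spider D_spider.
Proof.
  split.
  - intros [|[|k]]; unfold D_spider; [simpl; lra|lra|]. pose proof (pos_INR (S (S k))). lra.
  - intros k Hk. unfold a_spider.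
    destruct (spider_state k) as [[|x] [|]] eqn:E; cbn [spider_up];
      pose proof (spider_state_eq _ _ E) as Hidx; simpl in Hidx; try lia.
    + subst k. apply lyapunov_ratio; [apply close_up_pos|apply close_down_pos|].
      rewrite close_up_0, close_down_eq. simpl. lra.
    + pose proof (pos_INR x). rewrite !D_spider_generic by lia.
      rewrite S_INR.
      replace (INR k) with (2 * INR x + 3)
        by (replace k with (2 * x + 3)%nat by lia; rewrite plus_INR, mult_INR; simpl; ring).
      apply lyapunov_ratio; [apply close_up_pos|apply close_down_pos|].
      rewrite close_up_succ, widen_up_eq, close_down_eq, S_INR.
      set (X := INR x) in *.
      assert (Hslack : 0 < 48 / ((4 * X + 12) * (4 * X + 4))) by (apply frac_pos; nra).
      match goal with |- ?L <= ?R =>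
        replace R with (L + 48 / ((4 * X + 12) * (4 * X + 4))) by (field; lra) end.
      lra.
    + pose proof (pos_INR x). rewrite !D_spider_generic by lia.
      rewrite S_INR.
      replace (INR k) with (2 * INR x + 2)
        by (replace k with (2 * x + 2)%nat by lia; rewrite plus_INR, mult_INR; simpl; ring).
      apply lyapunov_ratio; [apply widen_up_pos|apply widen_down_pos|].
      rewrite widen_up_eq, widen_down_eq, S_INR. right. field. lra.
Qed.

Lemma SPIDER_positive_recurrent : positive_recurrent SPIDER.
Proof.
  apply (embedding_positive SPIDER spider_state a_spider SPIDER_embedding D_spider
           SPIDER_up_probs SPIDER_no_outward_drift SPIDER_lyapunov).
Qed.

Theorem mainTheorem8 : null_recurrent BD /\ positive_recurrent SPIDER.
Proof. split; [exact BD_null_recurrent|exact SPIDER_positive_recurrent]. Qed.
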